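(* Let $\mathcal{T}$ be a single-elimination tournament, $u\in V(\mathcal{T})$, $\mathcal{B}_u$ a non-empty set of brackets of $\mathcal{T}_u$, and $\mathcal{A}$ a partition of $P(\mathcal{T})\setminus P(u)$ such that for every $a\in P(\mathcal{T})\setminus P(u)$, the part $A\in\mathcal{A}$ with $a\in A$ contains some $b\in A\setminus\{a\}$ with $b\in P(x)$ for every match $x$ with $a\in P(x)$. Then there exists a set of brackets $\mathcal{B}$ of $\mathcal{T}$ with \[|\mathcal{B}|=|P(\mathcal{T})\setminus P(u)|+\max\{0,|\mathcal{B}_u|-|\mathcal{A}|\}\] such that, for every scoring system $\sigma$ of $\mathcal{T}$, $\mathcal{B}$ is $\sigma$-resolving whenever $\mathcal{B}_u$ is $\sigma_u$-resolving.
   Context: A single-elimination tournament is a finite directed graph $\mathcal{T}$ such that: (a) $\mathcal{T}$ has exactly one sink (vertex with no out-neighbours); (b) every non-sink vertex has exactly one out-neighbour; (c) $\mathcal{T}$ has no directed cycles; (d) $|N^-(v)|\ne 1$ for every vertex $v$, where $N^-(v)$ denotes the set of in-neighbours of $v$. The players $P(\mathcal{T})$ are the sources and the matches are $M(\mathcal{T})=V(\mathcal{T})\setminus P(\mathcal{T})$. For a vertex $u$, $P(u)$ is the set of players $a$ for which there is a directed walk from $a$ to $u$ (length $0$ allowed). For $u\in V(\mathcal{T})$, $\mathcal{T}_u$ is the digraph obtained from $\mathcal{T}$ by deleting every vertex $v$ with $P(v)\not\subseteq P(u)$ (it is a single-elimination tournament), and $\sigma_u$ is the restriction of $\sigma$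 to $M(\mathcal{T})\cap V(\mathcal{T}_u)=M(\mathcal{T}_u)$. A bracket is a function $B:V(\mathcal{T})\to P(\mathcal{T})$ with $B(a)=a$ for every player $a$ and $B(x)\in\{B(u):u\in N^-(x)\}$ for every match $x$. A scoring system is any function $\sigma:M(\mathcal{T})\to\mathbb{R}_{>0}$. For brackets $B,B'$ let $\mathrm{score}_\sigma(B,B')=\sum_{x\in M(\mathcal{T}):\,B(x)=B'(x)}\sigma(x)$. A set of brackets $\mathcal{B}$ is $\sigma$-resolving if for every pair of distinct brackets $B\ne B'$ there is $B_i\in\mathcal{B}$ with $\mathrm{score}_\sigma(B_i,B)\ne\mathrm{score}_\sigma(B_i,B')$ (and analogously for $\mathcal{T}_u,\sigma_u$). *)

From HB Require Import structures.
From mathcomp Require Import all_boot all_order all_algebra.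
From mathcomp Require Export reals.
Set Implicit Arguments. Unset Strict Implicit. Unset Printing Implicit Defensive.
Import Order.TTheory GRing.Theory Num.Theory.

(* A finite digraph is given by a vertex set S inside a finite ambient type V
   and the edge relation E restricted to S.  The whole tournament T is
   (setT, E); the subtournament T_u is (S_u, E) with S_u the set of vertices v
   with P(v) \subset P(u). *)
Section Digraph.
Variable V : finType.
Variable S : {set V}.
Variable E : rel V.

Definition Er : rel V := fun x y => [&& x \in S, y \in S & E x y].

Definition in_nb (v : V) : {set V} := [set y | Er y v].
Definition out_nb (v : V) : {set V} := [set y | Er v y].

Definition is_sink (v : V) : bool := (v \in S) && (#|out_nb v| == 0%N).

Definition is_SET : Prop :=
  [/\ #|[set v in S | is_sink v]| = 1%N,
      (forall v, v \in S -> ~~ is_sink v -> #|out_nb v| = 1%N),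
      (forall x y, Er x y -> ~~ connect Er y x) &
      (forall v, v \in S -> #|in_nb v| != 1%N)].

Definition players : {set V} := [set v in S | #|in_nb v| == 0%N].
Definition matches : {set V} := [set v in S | #|in_nb v| != 0%N].

Definition Pof (u : V) : {set V} := [set a in players | connect Er a u].

(* A bracket B : V(T) -> P(T), represented as a function on the ambient type;
   by convention it is the identity outside S, so that distinct brackets are
   distinct functions. *)
Definition is_bracket (B : {ffun V -> V}) : Prop :=
  [/\ (forall v, v \in S -> B v \in players),
      (forall a, a \in players -> B a = a),
      (forall x, x \in matches -> exists2 w, w \in in_nb x & B x = B w) &
      (forall v, v \notin S -> B v = v)].

Variable R : realType.

(* scoring system: sigma : M(T) -> R_{>0}; values outside the matches are irrelevant *)
Definition score (sigma : V -> R) (B B' : {ffun V -> V}) : R :=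
  (\sum_(x in matches | B x == B' x) sigma x)%R.

Definition resolving (sigma : V -> R) (Bs : {set {ffun V -> V}}) : Prop :=
  forall B B' : {ffun V -> V}, is_bracket B -> is_bracket B' -> B != B' ->
    exists2 Bi, Bi \in Bs & score sigma Bi B != score sigma Bi B'.

End Digraph.

Definition subT (V : finType) (E : rel V) (u : V) : {set V} :=
  [set v | Pof setT E v \subset Pof setT E u].

(* Every bracket C of T_u is extended to T: for a player a outside P(u), a wins
   all its matches outside T_u and every other match x outside T_u goes to a
   default winner chosen from P(x) \ P(u); the extension "None" uses the default
   winners only.  Assign brackets of B_u to the parts of A, injectively if
   |A| <= |B_u| and onto otherwise.  The family consists of the extension, for
   each a, of the bracket assigned to the part of a, together with the default
   extensions of the |B_u| - |A| unassigned brackets.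

   Let B, B' score equally against the whole family.  Take a lowest match y
   outside T_u where they differ and one of them, say B, picks a player a
   outside P(u); let b be a player of the part of a that plays in every match of
   a, and compare the extensions of one bracket for a and for b.  Relative to B',
   the one for a gains on B at least as much as the one for b at every match: only
   matches above y are affected, and there a can only agree with B and b only
   with B'.  At y the gain is strictly larger, by sigma(y) > 0, a contradiction.
   Hence outside T_u, B and B' differ only at matches won by players of P(u), the
   score of an extension reduces to a score in T_u, and resolvability of B_u
   makes B and B' agree on T_u; then they agree at u and therefore everywhere. *)

From mathcomp Require Import all_boot all_order all_algebra reals.
From mathcomp Require Import lra.
Import Order.TTheory GRing.Theory Num.Theory.
Set Implicit Arguments. Unset Strict Implicit. Unset Printing Implicit Defensive.

Lemma exists_map_uncovered_card (T1 T2 : finType) (X : {set T1}) (Y : {set T2}) :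
  Y != set0 ->
  exists f : T1 -> T2, (forall x, f x \in Y) /\ #|Y :\: f @: X| = (#|Y| - #|X|)%N.
Proof.
case/set0Pn=> y0 y0Y.
pose f x := nth y0 (enum Y) (index x (enum X)).
have fY x : f x \in Y.
  rewrite /f; case: (ltnP (index x (enum X)) (size (enum Y))) => [lt_iY | le_Yi].
    by rewrite -mem_enum mem_nth.
  by rewrite nth_default.
have fXY : f @: X \subset Y by apply/subsetP=> _ /imsetP[x _ ->].
exists f; split=> //; rewrite cardsD (setIidPr fXY).
have [leXY | ltYX] := leqP #|X| #|Y|.
  have iY z : z \in X -> (index z (enum X) < size (enum Y))%N.
    by move=> zX; rewrite -cardE (leq_trans _ leXY) // cardE index_mem mem_enum.
  congr (_ - _)%N; apply: card_in_imset => x x' xX x'X /eqP.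
  rewrite /f nth_uniq ?iY ?enum_uniq //.
  by move/eqP/(congr1 (nth x (enum X))); rewrite !nth_index ?mem_enum.
have /set0Pn[x0 _] : X != set0 by rewrite -card_gt0 (leq_ltn_trans _ ltYX).
suff -> : f @: X = Y by rewrite subnn; apply/esym/eqP; rewrite subn_eq0 ltnW.
apply/eqP; rewrite eqEsubset fXY; apply/subsetP=> y yY.
have iY : (index y (enum Y) < #|Y|)%N by rewrite cardE index_mem mem_enum.
have iX : (index y (enum Y) < size (enum X))%N by rewrite -cardE (ltn_trans iY).
apply/imsetP; exists (nth x0 (enum X) (index y (enum Y))); first by rewrite -mem_enum mem_nth.
by rewrite /f index_uniq ?enum_uniq // nth_index ?mem_enum.
Qed.

Section Tournament.
Variables (V : finType) (E : rel V).
Hypothesis SET : is_SET setT E.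

Local Notation e := (Er setT E).
Local Notation P := (Pof setT E).
Local Notation pl := (players setT E).
Local Notation ms := (matches setT E).

Lemma out_edge_uniq v y y' : e v y -> e v y' -> y = y'.
Proof.
move=> evy evy'; case: SET => _ out1 _ _.
have /cards1P[z out_v] : #|out_nb setT E v| == 1%N.
  apply/eqP/out1; rewrite ?in_setT // /is_sink in_setT -lt0n card_gt0.
  by apply/set0Pn; exists y; rewrite inE.
have : y \in out_nb setT E v by rewrite inE.
have : y' \in out_nb setT E v by rewrite inE.
by rewrite out_v !inE => /eqP-> /eqP->.
Qed.

Lemma edge_acyclic x y : e x y -> ~~ connect e y x.
Proof. by case: SET => _ _ acyc _; apply: acyc. Qed.

Lemma edge_irrefl x : ~~ e x x.
Proof. by apply/negP=> exx; move: (edge_acyclic exx); rewrite connect0. Qed.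

Lemma connect_first x z : connect e x z -> x != z -> exists2 y, e x y & connect e y z.
Proof.
case/connectP=> [[|y p] /= xp ->]; first by rewrite eqxx.
by case/andP: xp => exy yp _; exists y => //; apply/connectP; exists p.
Qed.

Lemma connect_last x z : connect e x z -> x != z -> exists2 y, connect e x y & e y z.
Proof.
case/connectP=> p xp ->; elim: p x xp => [|y p IHp] x /=; first by rewrite eqxx.
case/andP=> exy yp _; have [<-|ne_y] := eqVneq y (last y p); first by exists x.
by have [w yw ewz] := IHp y yp ne_y; exists w => //; apply: connect_trans (connect1 exy) yw.
Qed.

Lemma connect_total x y z : connect e x y -> connect e x z -> connect e y z || connect e z y.
Proof.
case/connectP=> p xp ->; elim: p x xp => [|x1 p IHp] x /=; first by move=> _ ->.
case/andP=> ex1 x1p xz; have [<-|ne_xz] := eqVneq x z.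
  by rewrite orbC (connect_trans (connect1 ex1)) //; apply/connectP; exists p.
have [x1' ex1' x1'z] := connect_first xz ne_xz.
by apply: IHp x1p _; rewrite (out_edge_uniq ex1 ex1').
Qed.

Lemma connect_antisym x y : connect e x y -> connect e y x -> x = y.
Proof.
move=> xy yx; apply/eqP; apply: contraT => ne_xy.
have [z exz zy] := connect_first xy ne_xy.
by move: (edge_acyclic exz); rewrite (connect_trans zy yx).
Qed.

Definition subtree_card v := #|[set w | connect e w v]|.

Lemma subtree_card_lt w v : connect e w v -> w != v -> (subtree_card w < subtree_card v)%N.
Proof.
move=> wv ne_wv; apply: proper_card; apply/properP; split.
  by apply/subsetP=> z; rewrite !inE => /connect_trans; apply.
exists v; rewrite !inE ?connect0 //.
by apply: contra ne_wv => vw; rewrite (connect_antisym wv vw).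
Qed.

Lemma edge_ind (Q : V -> Prop) : (forall v, (forall w, e w v -> Q w) -> Q v) -> forall v, Q v.
Proof.
move=> IH v; have [n] := ubnP (subtree_card v); elim: n v => // n IHn v lt_vn.
apply: IH => w ewv; apply: IHn; rewrite -ltnS (leq_trans _ lt_vn) // ltnS.
apply: subtree_card_lt (connect1 ewv) _.
by apply: contraNneq (edge_irrefl v) => wv; rewrite -{1}wv.
Qed.

Lemma exists_connect_minimal (D : {set V}) :
  D != set0 -> exists2 y, y \in D & forall x, x \in D -> connect e x y -> x = y.
Proof.
case/set0Pn=> y0 y0D; have [y yD ymin] := arg_minnP subtree_card y0D.
exists y => // x xD xy; apply/eqP; apply: contraT => ne_xy.
by have := subtree_card_lt xy ne_xy; rewrite ltnNge ymin.
Qed.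

Lemma exists_root : exists r, forall v, connect e v r.
Proof.
case: SET => one_sink out1 _ _; have /eqP/cards1P[r sinks] := one_sink.
exists r => v; have [w vw wmax] := @arg_maxnP _ v (connect e v) subtree_card (connect0 e v).
suff : w \in [set x in setT | is_sink setT E x] by rewrite sinks inE => /eqP <-.
rewrite inE in_setT; apply: contraT => w_not_sink.
have /eqP/cards1P[w1 out_w] := out1 w (in_setT w) w_not_sink.
have : w1 \in out_nb setT E w by rewrite out_w set11.
rewrite inE => ew.
have := wmax w1 (connect_trans vw (connect1 ew)); rewrite /= leqNgt => /negP[].
apply: subtree_card_lt (connect1 ew) _; apply: contraNneq (edge_acyclic ew) => <-.
exact: connect0.
Qed.

Lemma matchesE v : (v \in ms) = (v \notin pl).
Proof. by rewrite !inE. Qed.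

Lemma player_no_in_edge p w : p \in pl -> ~~ e w p.
Proof.
rewrite inE => /andP[_ /eqP/cards0_eq in_p]; apply/negP=> ewp.
have : w \in in_nb setT E p by rewrite inE.
by rewrite in_p inE.
Qed.

Lemma connect_player q p : p \in pl -> connect e q p -> q = p.
Proof.
move=> pl_p qp; apply/eqP; apply: contraT => ne_qp.
by have [w _ ewp] := connect_last qp ne_qp; move: (player_no_in_edge w pl_p); rewrite ewp.
Qed.

Lemma Pof_players v p : p \in P v -> p \in pl.
Proof. by rewrite inE => /andP[]. Qed.

Lemma Pof_connect v p : p \in P v -> connect e p v.
Proof. by rewrite inE => /andP[]. Qed.

Lemma Pof_player p : p \in pl -> P p = [set p].
Proof.
move=> pl_p; apply/setP=> q; rewrite in_set1; apply/idP/eqP => [qp | ->].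
  exact: connect_player pl_p (Pof_connect qp).
by rewrite inE pl_p connect0.
Qed.

Lemma Pof_sub w v : connect e w v -> P w \subset P v.
Proof.
by move=> wv; apply/subsetP=> p; rewrite !inE => /andP[-> /connect_trans]; apply.
Qed.

Lemma Pof_in_nb x p : x \in ms -> p \in P x -> exists2 w, e w x & p \in P w.
Proof.
move=> ms_x Px_p; have ne_px : p != x.
  by apply: contraTneq ms_x => <-; rewrite matchesE (Pof_players Px_p).
have [w pw ewx] := connect_last (Pof_connect Px_p) ne_px.
by exists w; rewrite // inE pw (Pof_players Px_p).
Qed.

Lemma Pof_comparable p x y : p \in P x -> p \in P y -> connect e x y || connect e y x.
Proof. by move=> /Pof_connect px /Pof_connect py; apply: connect_total px py. Qed.

Lemma in_nb_Pof_inj w w' x p : e w x -> e w' x -> p \in P w -> p \in P w' -> w = w'.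
Proof.
suff wlog_inj v v' : connect e v v' -> e v x -> e v' x -> v = v'.
  move=> ewx ew'x Pw_p Pw'_p; case/orP: (Pof_comparable Pw_p Pw'_p) => [ww' | w'w].
    exact: wlog_inj.
  exact/esym/wlog_inj.
move=> vv' evx ev'x; apply/eqP; apply: contraT => ne_vv'.
have [y evy yv'] := connect_first vv' ne_vv'.
by move: (edge_acyclic ev'x); rewrite -(out_edge_uniq evx evy) in yv'; rewrite yv'.
Qed.

Lemma bracket_Pof B : is_bracket setT E B -> forall v, B v \in P v.
Proof.
case=> _ Bpl Bms _; elim/edge_ind => v IHv.
have [pl_v | ms_v] := boolP (v \in pl); first by rewrite Bpl // inE pl_v connect0.
rewrite -matchesE in ms_v; have [w + ->] := Bms v ms_v; rewrite inE => ewv.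
exact: subsetP (Pof_sub (connect1 ewv)) _ (IHv w ewv).
Qed.

Lemma bracket_down B z y : is_bracket setT E B -> connect e z y -> B y \in P z -> B z = B y.
Proof.
move=> bB; have [_ _ Bms _] := bB; elim/edge_ind: y => y IHy zy Pz_By.
have [-> // | ne_zy] := eqVneq z y.
have [w zw ewy] := connect_last zy ne_zy.
have ms_y : y \in ms by rewrite matchesE; apply: contraTN ewy; apply: player_no_in_edge.
have [w' + By] := Bms y ms_y; rewrite inE => ew'y.
have Pw_By : B y \in P w by apply: subsetP (Pof_sub zw) _ Pz_By.
have Pw'_By : B y \in P w' by rewrite By bracket_Pof.
rewrite -(in_nb_Pof_inj ewy ew'y Pw_By Pw'_By) in By.
by rewrite By; apply: IHy; rewrite -?By.
Qed.

Section Subtournament.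
Variable u : V.
Local Notation S := (subT E u).
Local Notation D := (pl :\: P u).

Lemma subTE v : (v \in S) = (P v \subset P u).
Proof. by rewrite inE. Qed.

Lemma subT_closed w x : connect e w x -> x \in S -> w \in S.
Proof. by rewrite !subTE => /Pof_sub; apply: subset_trans. Qed.

Lemma notin_subT v p : p \in P v -> p \notin P u -> v \notin S.
Proof. by move=> Pv_p Pu'_p; rewrite subTE; apply/subsetPn; exists p. Qed.

Lemma in_nb_subT x : x \in S -> in_nb S E x = in_nb setT E x.
Proof.
move=> Sx; apply/setP=> w; rewrite [LHS]inE [RHS]inE /Er !in_setT Sx /=.
by apply/andb_idl => Ewx; apply: subT_closed Sx; rewrite connect1 // /Er !in_setT.
Qed.

Lemma players_subT v : (v \in players S E) = (v \in S) && (v \in pl).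
Proof.
rewrite [LHS]inE [v \in pl]inE in_setT.
by case Sv: (v \in S); rewrite //= in_nb_subT.
Qed.

Lemma matches_subT v : (v \in matches S E) = (v \in S) && (v \in ms).
Proof.
rewrite [LHS]inE [v \in ms]inE in_setT.
by case Sv: (v \in S); rewrite //= in_nb_subT.
Qed.

Lemma player_subT p : p \in pl -> (p \in S) = (p \in P u).
Proof. by move=> pl_p; rewrite subTE Pof_player // sub1set. Qed.

Definition restr (B : {ffun V -> V}) : {ffun V -> V} :=
  [ffun v => if v \in S then B v else v].

Lemma restr_bracket B : is_bracket setT E B -> is_bracket S E (restr B).
Proof.
move=> bB; have [Bpl Bfix Bms _] := bB; split.
- move=> v Sv; rewrite ffunE Sv players_subT Bpl ?in_setT // andbT.
  rewrite player_subT ?Bpl ?in_setT //.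
  by apply: subsetP (bracket_Pof bB v); rewrite -subTE.
- by move=> p; rewrite players_subT ffunE => /andP[-> /Bfix].
- move=> x; rewrite matches_subT => /andP[Sx ms_x].
  have [w + Bx] := Bms x ms_x; rewrite inE => ewx.
  exists w; first by rewrite in_nb_subT // inE.
  by rewrite !ffunE Sx (subT_closed (connect1 ewx) Sx).
- by move=> v /negbTE Sv'; rewrite ffunE Sv'.
Qed.

(* Maximising one fixed ranking makes the default winners hereditary (top_sub). *)
Definition top x : V :=
  if [pick p in P x :\: P u] is Some p0
  then [arg max_(p > p0 in P x :\: P u) enum_rank p] else x.

Lemma topP x : x \notin S ->
  top x \in P x :\: P u /\ forall q, q \in P x :\: P u -> (enum_rank q <= enum_rank (top x))%N.
Proof.
rewrite subTE => /subsetPn[p Px_p Pu'_p]; rewrite /top; case: pickP => [p0 Dx_p0 | none].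
  by case: (arg_maxnP (fun q : V => val (enum_rank q)) Dx_p0).
by move: (none p); rewrite in_setD Px_p Pu'_p.
Qed.

Lemma top_fresh x : x \notin S -> top x \in P x :\: P u.
Proof. by case/topP. Qed.

Lemma top_sub w x : x \notin S -> P w \subset P x -> top x \in P w -> top w = top x.
Proof.
move=> Sx' wx Pw_top; have [Dx_top top_max] := topP Sx'.
have Dw_top : top x \in P w :\: P u by move: Dx_top; rewrite !in_setD Pw_top andbT => /andP[].
have [Dw_topw topw_max] := topP (notin_subT Pw_top (setDP Dw_top).2).
have Dx_topw : top w \in P x :\: P u.
  by case/setDP: Dw_topw => Pw_topw Pu'_topw; rewrite in_setD Pu'_topw (subsetP wx).
by apply/enum_rank_inj/val_inj/eqP; rewrite eqn_leq top_max ?topw_max.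
Qed.

Definition fresh (oa : option V) : bool := if oa is Some a then a \in D else true.

Definition ext (C : {ffun V -> V}) (oa : option V) : {ffun V -> V} :=
  [ffun x => if x \in S then C x else
     if oa is Some a then (if a \in P x then a else top x) else top x].

Lemma ext_fresh C oa x : fresh oa -> x \notin S -> ext C oa x \in P x :\: P u.
Proof.
move=> fresh_oa Sx'; rewrite ffunE (negbTE Sx').
case: oa fresh_oa => [a /= Da|_]; last exact: top_fresh.
by case: ifP => [Px_a | _]; [rewrite in_setD Px_a andbT; case/setDP: Da | exact: top_fresh].
Qed.

Lemma ext_in_nb C oa w x :
  fresh oa -> x \notin S -> e w x -> ext C oa x \in P w -> ext C oa w = ext C oa x.
Proof.
move=> fresh_oa Sx' ewx Pw_v.
have Sw' := notin_subT Pw_v (setDP (ext_fresh C fresh_oa Sx')).2.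
move: Pw_v; rewrite !ffunE (negbTE Sw') (negbTE Sx').
case: oa {fresh_oa} => [a|]; last exact: top_sub (Pof_sub (connect1 ewx)).
case: ifP => [_ -> // | Px_a Pw_top].
have -> : (a \in P w) = false by apply: contraFF Px_a; apply: subsetP (Pof_sub (connect1 ewx)) a.
exact: top_sub (Pof_sub (connect1 ewx)) _.
Qed.

Lemma ext_bracket C oa : is_bracket S E C -> fresh oa -> is_bracket setT E (ext C oa).
Proof.
case=> Cpl Cfix Cms Cout fresh_oa; split.
- move=> v _; have [Sv | Sv'] := boolP (v \in S).
    by rewrite ffunE Sv; have := Cpl v Sv; rewrite players_subT => /andP[].
  by case/setDP: (ext_fresh C fresh_oa Sv') => /Pof_players.
- move=> p pl_p; have [Sp | Sp'] := boolP (p \in S).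
    by rewrite ffunE Sp Cfix // players_subT Sp.
  by case/setDP: (ext_fresh C fresh_oa Sp'); rewrite Pof_player // in_set1 => /eqP.
- move=> x ms_x; have [Sx | Sx'] := boolP (x \in S).
    have [|w + Cx] := Cms x; first by rewrite matches_subT Sx.
    rewrite in_nb_subT // inE => ewx.
    by exists w; rewrite ?inE // !ffunE Sx Cx (subT_closed (connect1 ewx) Sx).
  case/setDP: (ext_fresh C fresh_oa Sx') => /(Pof_in_nb ms_x)[w ewx Pw_v] _.
  by exists w; rewrite ?inE // (ext_in_nb fresh_oa Sx' ewx Pw_v).
- by move=> v; rewrite in_setT.
Qed.

Lemma ext_inj C C' oa oa' :
  is_bracket S E C -> is_bracket S E C' -> ext C oa = ext C' oa' -> C = C'.
Proof.
case=> _ _ _ Cout [_ _ _ C'out] /ffunP eq_ext; apply/ffunP=> v.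
have [Sv | Sv'] := boolP (v \in S); last by rewrite Cout ?C'out.
by have := eq_ext v; rewrite !ffunE Sv.
Qed.

Lemma ext_root r C a : (forall v, connect e v r) -> a \in D -> ext C (Some a) r = a.
Proof.
move=> to_r /setDP[pl_a Pu'_a]; have Pr_a : a \in P r by rewrite inE pl_a to_r.
by rewrite ffunE (negbTE (notin_subT Pr_a Pu'_a)) Pr_a.
Qed.

Section Scores.
Variable R : realType.
Local Open Scope ring_scope.

Definition outside (sigma : V -> R) (Z B : {ffun V -> V}) : R :=
  \sum_(x in ms | x \notin S) (if Z x == B x then sigma x else 0).

Lemma score_ext (sigma : V -> R) (C B : {ffun V -> V}) oa :
  score setT E sigma (ext C oa) B = score S E sigma C (restr B) + outside sigma (ext C oa) B.
Proof.
rewrite /score (bigID (mem S)) /=; congr (_ + _).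
  by apply: eq_bigl => x; rewrite matches_subT !ffunE; case: (x \in S); rewrite ?andbT ?andbF.
by rewrite /outside -big_mkcondr; apply: eq_bigl => x /=; rewrite andbAC.
Qed.

Definition disagree (B B' : {ffun V -> V}) : {set V} :=
  [set y in ms | [&& y \notin S, B y != B' y & (B y \notin P u) || (B' y \notin P u)]].

Lemma disagreeC (B B' : {ffun V -> V}) : disagree B B' = disagree B' B.
Proof. by apply/setP=> y; rewrite [LHS]in_set [RHS]in_set eq_sym orbC. Qed.

Lemma ext_off_disagree (C B B' : {ffun V -> V}) oa x : fresh oa -> x \in ms -> x \notin S ->
  x \notin disagree B B' -> (ext C oa x == B x) = (ext C oa x == B' x).
Proof.
move=> fresh_oa ms_x Sx' agree; have [-> // | ne_B] := eqVneq (B x) (B' x).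
move: agree; rewrite in_set ms_x Sx' ne_B /= negb_or !negbK => /andP[Pu_B Pu_B'].
have /setDP[_ Pu'_ext] := ext_fresh C fresh_oa Sx'.
have ext_neq p : p \in P u -> (ext C oa x == p) = false.
  by move=> Pu_p; apply: contraNF Pu'_ext => /eqP->.
by rewrite !ext_neq.
Qed.

Lemma outside_eq (sigma : V -> R) (C B B' : {ffun V -> V}) oa : fresh oa -> disagree B B' = set0 ->
  outside sigma (ext C oa) B = outside sigma (ext C oa) B'.
Proof.
move=> fresh_oa no_dis; apply: eq_bigr => x /andP[ms_x Sx'].
by rewrite (@ext_off_disagree C B B' oa x fresh_oa ms_x Sx') // no_dis inE.
Qed.

Definition partner a b := forall x, x \in ms -> a \in P x -> b \in P x.

Lemma outside_partner_lt (sigma : V -> R) (B B' C : {ffun V -> V}) a b y :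
  (forall x, x \in ms -> 0 < sigma x) ->
  is_bracket setT E B -> is_bracket setT E B' ->
  a \in D -> b \in D -> b != a -> partner a b ->
  y \in disagree B B' -> (forall x, x \in disagree B B' -> connect e x y -> x = y) ->
  B y = a ->
  outside sigma (ext C (Some b)) B - outside sigma (ext C (Some b)) B' <
  outside sigma (ext C (Some a)) B - outside sigma (ext C (Some a)) B'.
Proof.
move=> sigma_gt0 bB bB' Da Db ne_ba ab y_dis y_min By.
pose gain Z x := (if Z x == B x then sigma x else 0) - (if Z x == B' x then sigma x else 0).
move: (y_dis); rewrite in_set => /andP[ms_y /and3P[Sy' ne_By _]].
have Py_a : a \in P y by rewrite -By bracket_Pof.
have Py_b : b \in P y := ab y ms_y Py_a.
(* Above y, [a] can only agree with [B] and [b] only with [B']. *)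
have gain_below x : x \in ms -> x \notin S -> connect e y x ->
    gain (ext C (Some b)) x <= 0 /\ gain (ext C (Some a)) x = if a == B x then sigma x else 0.
  move=> ms_x Sx' yx; have sigma_x := sigma_gt0 x ms_x.
  have aB'x : (a == B' x) = false.
    apply: contraNF ne_By => /eqP aB'x.
    by rewrite By aB'x (bracket_down bB' yx) // -aB'x.
  have bBx : (b == B x) = false.
    apply: contraNF ne_ba => /eqP bBx.
    by rewrite -By (bracket_down bB yx) -bBx.
  rewrite /gain /= !ffunE (negbTE Sx') !(subsetP (Pof_sub yx)) // aB'x bBx subr0 sub0r.
  by split=> //; rewrite oppr_le0; case: ifP => // _; apply: ltW.
have gain_le x : x \in ms -> x \notin S -> gain (ext C (Some b)) x <= gain (ext C (Some a)) x.
  move=> ms_x Sx'; have sigma_x := sigma_gt0 x ms_x.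
  have [x_dis | x_agree] := boolP (x \in disagree B B'); last first.
    have fresh_a : fresh (Some a) := Da; have fresh_b : fresh (Some b) := Db.
    rewrite /gain (ext_off_disagree C fresh_a ms_x Sx' x_agree).
    by rewrite (ext_off_disagree C fresh_b ms_x Sx' x_agree) !subrr.
  have [ab_x | ] := boolP ((a \in P x) || (b \in P x)).
    have yx : connect e y x.
      have [p Py_p Px_p] : exists2 p, p \in P y & p \in P x.
        by case/orP: ab_x; [exists a | exists b].
      by case/orP: (Pof_comparable Py_p Px_p) => // xy; rewrite (y_min x x_dis xy) connect0.
    have [gain_b gain_a] := gain_below x ms_x Sx' yx.
    by rewrite gain_a (le_trans gain_b) //; case: ifP => // _; apply: ltW.
  by case/norP=> /negbTE Px'_a /negbTE Px'_b; rewrite /gain /= !ffunE (negbTE Sx') Px'_a Px'_b.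
suff : \sum_(x in ms | x \notin S) gain (ext C (Some b)) x <
       \sum_(x in ms | x \notin S) gain (ext C (Some a)) x by rewrite /outside -!sumrB.
have ms_Sy : (y \in ms) && (y \notin S) by rewrite ms_y.
rewrite [X in _ < X](bigD1 y ms_Sy) [X in X < _](bigD1 y ms_Sy) /=.
apply: ltr_leD; last by apply: ler_sum => x /andP[/andP[ms_x Sx'] _]; apply: gain_le.
have [gain_b gain_a] := gain_below y ms_y Sy' (connect0 e y).
by rewrite gain_a By eqxx (le_lt_trans gain_b) ?sigma_gt0.
Qed.

Lemma disagree_eq0 (sigma : V -> R) (Bs : {set {ffun V -> V}}) (B B' : {ffun V -> V}) :
  (forall x, x \in ms -> 0 < sigma x) ->
  (forall a, a \in D -> exists b C, [/\ b \in D, b != a, partner a b,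
     ext C (Some a) \in Bs & ext C (Some b) \in Bs]) ->
  is_bracket setT E B -> is_bracket setT E B' ->
  (forall Z, Z \in Bs -> score setT E sigma Z B = score setT E sigma Z B') ->
  disagree B B' = set0.
Proof.
move=> sigma_gt0 partners bB bB' same; apply/eqP; apply: contraT.
case/exists_connect_minimal=> y y_dis y_min.
wlog Pu'_By : B B' bB bB' same y_dis y_min / B y \notin P u.
  move=> wlog_By; move: (y_dis); rewrite in_set => /and4P[_ _ _ /orP[] Pu'_y].
    exact: (wlog_By B B').
  rewrite disagreeC in y_dis y_min.
  by apply: (wlog_By B' B) => // Z /same ->.
have Da : B y \in D by rewrite in_setD Pu'_By (Pof_players (bracket_Pof bB y)).
have [b [C [Db ne_ba ab Bs_a Bs_b]]] := partners _ Da.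
have := outside_partner_lt C sigma_gt0 bB bB' Da Db ne_ba ab y_dis y_min erefl.
by move: (same _ Bs_a) (same _ Bs_b); rewrite !score_ext => ? ?; lra.
Qed.

Lemma bracket_eq (B B' : {ffun V -> V}) : is_bracket setT E B -> is_bracket setT E B' ->
  disagree B B' = set0 -> restr B = restr B' -> B = B'.
Proof.
move=> bB bB' no_dis /ffunP eq_restr; apply/ffunP=> v.
have eq_S w : w \in S -> B w = B' w by move=> Sw; have := eq_restr w; rewrite !ffunE Sw.
have [Sv | Sv'] := boolP (v \in S); first exact: eq_S.
have [pl_v | ms_v] := boolP (v \in pl).
  by case: bB bB' => _ Bfix _ _ [_ B'fix _ _]; rewrite Bfix ?B'fix.
rewrite -matchesE in ms_v; apply/eqP; apply: contraT => ne_Bv.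
have : v \notin disagree B B' by rewrite no_dis inE.
rewrite in_set ms_v Sv' ne_Bv /= negb_or !negbK => /andP[Pu_Bv Pu_B'v].
have u_v p : p \in P u -> p \in P v -> connect e u v.
  move=> Pu_p Pv_p; case/orP: (Pof_comparable Pu_p Pv_p) => // vu.
  by move: Sv'; rewrite (subT_closed vu) // subTE.
have Bu := bracket_down bB (u_v _ Pu_Bv (bracket_Pof bB v)) Pu_Bv.
have B'u := bracket_down bB' (u_v _ Pu_B'v (bracket_Pof bB' v)) Pu_B'v.
by move: ne_Bv; rewrite -Bu -B'u eq_S ?eqxx // subTE.
Qed.

Lemma resolving_ext (sigma : V -> R) (Bu Bs : {set {ffun V -> V}}) :
  (forall x, x \in ms -> 0 < sigma x) ->
  (forall C, C \in Bu -> exists2 oa, fresh oa & ext C oa \in Bs) ->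
  (forall a, a \in D -> exists b C, [/\ b \in D, b != a, partner a b,
     ext C (Some a) \in Bs & ext C (Some b) \in Bs]) ->
  resolving S E sigma Bu -> resolving setT E sigma Bs.
Proof.
move=> sigma_gt0 covered partners res_Bu B B' bB bB' ne_BB'.
have [/exists_inP // | /exists_inPn same] :=
  boolP [exists Z in Bs, score setT E sigma Z B != score setT E sigma Z B'].
have {}same Z : Z \in Bs -> score setT E sigma Z B = score setT E sigma Z B'.
  by move/same/negPn/eqP.
have no_dis := disagree_eq0 sigma_gt0 partners bB bB' same.
suff eq_restr : restr B = restr B' by rewrite (bracket_eq bB bB' no_dis eq_restr) eqxx in ne_BB'.
apply/eqP; apply: contraT => ne_restr.
have [C Bu_C ne_score] := res_Bu _ _ (restr_bracket bB) (restr_bracket bB') ne_restr.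
have [oa fresh_oa Bs_ext] := covered C Bu_C.
move: (same _ Bs_ext); rewrite !score_ext (outside_eq sigma C fresh_oa no_dis).
by move/addIr=> eq_score; rewrite eq_score eqxx in ne_score.
Qed.

End Scores.

Section Family.
Variables (Bu : {set {ffun V -> V}}) (A : {set {set V}}) (f : {set V} -> {ffun V -> V}).
Hypotheses (Bu_brackets : forall C, C \in Bu -> is_bracket S E C)
           (f_Bu : forall A0, f A0 \in Bu) (partA : partition A D).

Definition family : {set {ffun V -> V}} :=
  [set ext (f (pblock A a)) (Some a) | a in D] :|: [set ext C None | C in Bu :\: f @: A].

Lemma family_brackets B : B \in family -> is_bracket setT E B.
Proof.
case/setUP=> /imsetP[x Dx ->]; apply: ext_bracket => //; apply: Bu_brackets => //.
by case/setDP: Dx.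
Qed.

Lemma card_family : #|family| = (#|D| + #|Bu :\: f @: A|)%N.
Proof.
have [r to_r] := exists_root.
rewrite cardsU (_ : _ :&: _ = set0) ?cards0 ?subn0; last first.
  apply/setP=> Z; rewrite inE in_set0; apply/andP.
  case=> /imsetP[a Da ->] /imsetP[C /setDP[Bu_C fA'_C]].
  move/(ext_inj (Bu_brackets (f_Bu _)) (Bu_brackets Bu_C)) => eqC.
  by move: fA'_C; rewrite -eqC imset_f // pblock_mem // (cover_partition partA).
congr (_ + _)%N; apply: card_in_imset.
  by move=> a a' Da Da' /(congr1 (fun Z : {ffun V -> V} => Z r)); rewrite !ext_root.
move=> C C' /setDP[Bu_C _] /setDP[Bu_C' _].
exact: ext_inj (Bu_brackets Bu_C) (Bu_brackets Bu_C').
Qed.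

Lemma family_cover C : C \in Bu -> exists2 oa, fresh oa & ext C oa \in family.
Proof.
move=> Bu_C; have [/imsetP[A0 A_A0 ->] | fA'_C] := boolP (C \in f @: A); last first.
  by exists None => //; apply/setUP; right; apply/imsetP; exists C; rewrite // in_setD fA'_C.
case/and3P: partA => /eqP cover_A trivA A'_0.
have [a A0_a] : exists a, a \in A0 by apply/set0Pn; apply: contraNneq A'_0 => <-.
have Da : a \in D by rewrite -cover_A; apply/bigcupP; exists A0.
exists (Some a) => //; apply/setUP; left; apply/imsetP; exists a => //.
by rewrite (def_pblock trivA A_A0 A0_a).
Qed.

Lemma family_partner a :
  (forall a A0, a \in D -> A0 \in A -> a \in A0 -> exists2 b, b \in A0 :\ a & partner a b) ->
  a \in D -> exists b C, [/\ b \in D, b != a, partner a b,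
    ext C (Some a) \in family & ext C (Some b) \in family].
Proof.
move=> partners Da; case/and3P: (partA) => /eqP cover_A trivA _.
have A_Aa : pblock A a \in A by rewrite pblock_mem // cover_A.
have Aa_a : a \in pblock A a by rewrite mem_pblock cover_A.
have [b /setD1P[ne_ba Aa_b] ab] := partners a _ Da A_Aa Aa_a.
have Db : b \in D by rewrite -cover_A; apply/bigcupP; exists (pblock A a).
exists b, (f (pblock A a)); split=> //; apply/setUP; left; apply/imsetP.
  by exists a.
by exists b; rewrite // (def_pblock trivA A_Aa Aa_b).
Qed.

End Family.
End Subtournament.
End Tournament.

Theorem proposition5p11 (R : realType) (V : finType) (E : rel V) :
  is_SET setT E ->
  forall (u : V) (Bu : {set {ffun V -> V}}),
    (forall B, B \in Bu -> is_bracket (subT E u) E B) ->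
    Bu != set0 ->
  forall (A : {set {set V}}),
    partition A (players setT E :\: Pof setT E u) ->
    (forall a A0, a \in players setT E :\: Pof setT E u -> A0 \in A -> a \in A0 ->
       exists2 b, b \in A0 :\ a &
         forall x, x \in matches setT E -> a \in Pof setT E x -> b \in Pof setT E x) ->
  exists Bs : {set {ffun V -> V}},
    [/\ (forall B, B \in Bs -> is_bracket setT E B),
        #|Bs| = (#|players setT E :\: Pof setT E u| + (#|Bu| - #|A|))%N &
        forall sigma : V -> R,
          (forall x, x \in matches setT E -> (0 < sigma x)%R) ->
          resolving (subT E u) E sigma Bu -> resolving setT E sigma Bs].
Proof.
move=> SET u Bu Bu_brackets Bu_ne A partA partners.
have [f [f_Bu card_unused]] := exists_map_uncovered_card A Bu_ne.
exists (family E u Bu A f); split.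
- exact: family_brackets.
- by rewrite card_family // card_unused.
- move=> sigma sigma_gt0; apply: resolving_ext => // [C | a].
    exact: family_cover.
  exact: family_partner.
Qed.
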